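(* Let $q$ be a prime power and $t\ge1$ an integer. In a projective space over $\mathbb{F}_q$, let $\Omega$ be a $(t-2)$-dimensional subspace, $\Gamma$ a plane skew from $\Omega$, $\bar{B}$ a non-trivial minimal blocking set of $\Gamma$, and $K$ the cone with vertex $\Omega$ and base $\bar{B}$. Then every point $P$ of $K$ not contained in $\Omega$ lies on exactly $(q^{t-1}-1)/(q-1)$ lines contained in $K$.
   Context: The cone with vertex $\Omega$ and base $\bar{B}$ is $\bigcup_{P\in\bar B}\langle P,\Omega\rangle$. A blocking set of a plane is a point set meeting every line; minimal means no proper subset does; non-trivial means it does not contain a line. *)

(* The projective space PG(n-1, F) is modelled through the
   row spaces (mxalgebra) of the vector space 'rV[F]_n.  A projective subspace
   of projective dimension d is a matrix whose row space has rank d+1; a point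
   or a line is represented canonically by the matrix <<X>>%MS of its row space,
   so that distinct points/lines are distinct matrices and can be counted. *)
From HB Require Import structures.
From mathcomp Require Import all_boot all_order all_algebra.
Set Implicit Arguments. Unset Strict Implicit. Unset Printing Implicit Defensive.
Import GRing.Theory.
Local Open Scope ring_scope.

Section Proj.
Variables (F : finFieldType) (n : nat).

Definition is_psub (r : nat) (X : 'M[F]_n) : bool :=
  (<<X>>%MS == X) && (\rank X == r).

Definition is_point (X : 'M[F]_n) : bool := is_psub 1 X.
Definition is_line (X : 'M[F]_n) : bool := is_psub 2 X.

Definition points : {set 'M[F]_n} := [set X | is_point X].

Definition line_in (L : 'M[F]_n) (S : {set 'M[F]_n}) : bool :=
  [forall X : 'M[F]_n, is_point X ==> (X <= L)%MS ==> (X \in S)].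

Definition blocking_set (G : 'M[F]_n) (S : {set 'M[F]_n}) : Prop :=
  (forall X, X \in S -> is_point X /\ (X <= G)%MS) /\
  (forall L : 'M[F]_n, is_line L -> (L <= G)%MS ->
     exists2 X, X \in S & (X <= L)%MS).

Definition minimal_blocking_set (G : 'M[F]_n) (S : {set 'M[F]_n}) : Prop :=
  blocking_set G S /\
  (forall S' : {set 'M[F]_n}, S' \proper S -> ~ blocking_set G S').

Definition nontrivial_bset (G : 'M[F]_n) (S : {set 'M[F]_n}) : Prop :=
  forall L : 'M[F]_n, is_line L -> (L <= G)%MS -> ~~ line_in L S.

Definition cone (Om : 'M[F]_n) (B : {set 'M[F]_n}) : {set 'M[F]_n} :=
  [set X | is_point X && [exists P in B, (X <= Om + P)%MS]].

Definition lines_through_in (X : 'M[F]_n) (S : {set 'M[F]_n}) : {set 'M[F]_n} :=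
  [set L | is_line L && (X <= L)%MS & line_in L S].

End Proj.

From HB Require Import structures.
From mathcomp Require Import all_boot all_order all_algebra zify.
Import GRing.Theory.
Set Implicit Arguments.
Unset Strict Implicit.
Unset Printing Implicit Defensive.
Local Open Scope ring_scope.

(** A line of the cone through a point P outside the vertex either meets the
   vertex Om, and then lies in the space <Om, P> = <Om, Q> spanned by Om and
   the base point Q below P; or it is skew to Om, and then its projection from
   Om onto the plane Gam is a line all of whose points lie in the base,
   which non-triviality forbids.  So the lines through P in the cone are
   exactly the lines through P in the (t-1)-space <Om, Q>, and there are
   (q^t - q) / (q^2 - q) of those. *)

Section RowSpaces.
Variable F : fieldType.

Lemma submx_rank_geq m1 m2 n (A : 'M[F]_(m1, n)) (B : 'M[F]_(m2, n)) :
  (A <= B)%MS -> (\rank B <= \rank A)%N -> (B <= A)%MS.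
Proof. by move=> sAB; rewrite (geq_leqif (mxrank_leqif_sup sAB)). Qed.

Lemma capmx_rank1_eq0 m1 m2 n (A : 'M[F]_(m1, n)) (X : 'M[F]_(m2, n)) :
  \rank X = 1%N -> ~~ (X <= A)%MS -> (A :&: X)%MS = 0.
Proof.
move=> rX nXA; apply/eqP; rewrite -mxrank_eq0; apply: contraNT nXA => nz.
have sX : (X <= A :&: X)%MS by apply: submx_rank_geq; rewrite ?capmxSr // rX lt0n.
exact: submx_trans sX (capmxSl _ _).
Qed.

Lemma mxrank_adds_rank1 m1 m2 n (A : 'M[F]_(m1, n)) (X : 'M[F]_(m2, n)) :
  \rank X = 1%N -> ~~ (X <= A)%MS -> \rank (A + X)%MS = (\rank A).+1.
Proof. by move=> rX nXA; rewrite mxrank_disjoint_sum ?capmx_rank1_eq0 // rX addn1. Qed.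

Lemma addsmx_exchange m1 m2 m3 n (A : 'M[F]_(m1, n)) (X : 'M[F]_(m2, n))
    (Y : 'M[F]_(m3, n)) :
  \rank X = 1%N -> \rank Y = 1%N -> (X <= A + Y)%MS -> ~~ (X <= A)%MS ->
  (A + Y <= A + X)%MS.
Proof.
move=> rX rY sX nXA; have nYA : ~~ (Y <= A)%MS.
  by apply: contra nXA => sYA; rewrite (submx_trans sX) // addsmx_sub submx_refl.
apply: submx_rank_geq; first by rewrite addsmx_sub addsmxSl.
by rewrite !mxrank_adds_rank1.
Qed.

Lemma capmx_adds_skew m1 m2 m3 n (A : 'M[F]_(m1, n)) (G : 'M[F]_(m2, n))
    (R : 'M[F]_(m3, n)) :
  (A :&: G)%MS = 0 -> (R <= G)%MS -> ((A + R) :&: G <= R)%MS.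
Proof. by move=> AG0 sRG; rewrite addsmxC -matrix_modl // AG0 addsmx0. Qed.

Lemma line_meeting_sub_adds m1 m2 m3 n (A : 'M[F]_(m1, n)) (L : 'M[F]_(m2, n))
    (P : 'M[F]_(m3, n)) :
  \rank L = 2%N -> \rank P = 1%N -> (P <= L)%MS -> ~~ (P <= A)%MS ->
  (A :&: L)%MS != 0 -> (L <= A + P)%MS.
Proof.
move=> rL rP sPL nPA AL_nz.
have sAPL : (A + P <= A + L)%MS by rewrite addsmxS.
suff sALP : (A + L <= A + P)%MS by exact: submx_trans (addsmxSr _ _) sALP.
apply: submx_rank_geq sAPL _; rewrite (mxrank_adds_rank1 rP) //.
rewrite -mxrank_eq0 in AL_nz; have := mxrank_sum_cap A L; rewrite rL; lia.
Qed.

End RowSpaces.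

Section Projective.
Variables (F : finFieldType) (n : nat).

Lemma psub_eq r (X Y : 'M[F]_n) : is_psub r X -> is_psub r Y -> (X <= Y)%MS -> X = Y.
Proof.
move=> /andP[/eqP gX /eqP rX] /andP[/eqP gY /eqP rY] sXY.
by rewrite -gX -gY; apply/eq_genmx/eqmxP; rewrite sXY submx_rank_geq ?rX ?rY.
Qed.

Lemma psub_rank r (X : 'M[F]_n) : is_psub r X -> \rank X = r.
Proof. by case/andP=> _ /eqP. Qed.

Lemma is_psub_gen r m (A : 'M[F]_(m, n)) : \rank A = r -> is_psub r <<A>>%MS.
Proof. by move=> rA; rewrite /is_psub genmx_id mxrank_gen rA !eqxx. Qed.

Lemma card_row_sub m (A : 'M[F]_(m, n)) :
  #|[set v : 'rV[F]_n | (v <= A)%MS]| = (#|F| ^ \rank A)%N.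
Proof.
have -> : [set v : 'rV[F]_n | (v <= A)%MS] =
          [set u *m row_base A | u in 'rV[F]_(\rank A)].
  apply/setP=> v; rewrite inE -(eq_row_base A).
  by apply/submxP/imsetP => [[u ->]|[u _ ->]]; exists u.
rewrite card_imset ?card_mx ?mul1n //.
have [C AC1] := row_freeP (row_base_free A); apply: can_inj (mulmx^~ C) _ => v.
by rewrite -mulmxA AC1 mulmx1.
Qed.

Lemma card_row_sub_out m1 m2 (A : 'M[F]_(m1, n)) (P : 'M[F]_(m2, n)) :
  (P <= A)%MS ->
  #|[set v : 'rV[F]_n | (v <= A)%MS && ~~ (v <= P)%MS]| =
  (#|F| ^ \rank A - #|F| ^ \rank P)%N.
Proof.
move=> sPA; have sub : [set v : 'rV[F]_n | (v <= P)%MS] \subset [set v | (v <= A)%MS].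
  by apply/subsetP => v; rewrite !inE => /submx_trans->.
rewrite -!card_row_sub -(setIidPr sub) -cardsD.
by apply: eq_card => v; rewrite !inE andbC.
Qed.

(* Partition the vectors v of S outside P by the subspace <<P + v>>; the class
   of such a subspace L consists of the q^(r+1) - q^r vectors of L outside P,
   where r = \rank P. *)
Lemma card_psub_ext m (S : 'M[F]_(m, n)) (P : 'M[F]_n) : (P <= S)%MS ->
  (#|[set L : 'M[F]_n | is_psub (\rank P).+1 L && (P <= L)%MS && (L <= S)%MS]|
     * (#|F| ^ (\rank P).+1 - #|F| ^ \rank P) =
   #|F| ^ \rank S - #|F| ^ \rank P)%N.
Proof.
move=> sPS; set Ls := [set L | _].
have rk (v : 'rV[F]_n) : ~~ (v <= P)%MS -> \rank (P + v)%MS = (\rank P).+1.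
  move=> nvP; rewrite mxrank_adds_rank1 // rank_rV.
  by case: eqP nvP => // ->; rewrite sub0mx.
rewrite -(card_row_sub_out sPS) -[X in _ = X]sum1_card.
rewrite (partition_big (fun v : 'rV[F]_n => <<(P + v)%MS>>%MS) (mem Ls)) /=; last first.
  move=> v; rewrite inE => /andP[vS nvP]; rewrite inE is_psub_gen ?rk //=.
  by rewrite !genmxE addsmxSl addsmx_sub sPS vS.
rewrite -sum_nat_const; apply: eq_bigr => L; rewrite inE => /andP[/andP[pL sPL] sLS].
rewrite -(psub_rank pL) -(card_row_sub_out sPL) sum1_card.
apply: eq_card => v; rewrite [in RHS]unfold_in /= !inE.
case nvP: (v <= P)%MS; rewrite ?andbF //= !andbT.
apply/idP/andP => [vL|[_ /eqP <-]]; last by rewrite genmxE addsmxSr.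
split; first exact: submx_trans vL sLS.
apply/eqP/psub_eq; [by rewrite is_psub_gen ?rk ?nvP | exact: pL |].
by rewrite genmxE addsmx_sub sPL.
Qed.

Lemma card_lines_through m (S : 'M[F]_(m, n)) (P : 'M[F]_n) :
  is_point P -> (P <= S)%MS ->
  #|[set L : 'M[F]_n | is_line L && (P <= L)%MS && (L <= S)%MS]| =
  ((#|F| ^ (\rank S).-1 - 1) %/ (#|F| - 1))%N.
Proof.
move=> /psub_rank rP sPS; have := card_psub_ext sPS; rewrite rP.
have q_gt1 : (1 < #|F|)%N := card_finNzRing_gt1 F.
have := mxrankS sPS; rewrite rP; case: (\rank S) => // s _.
have e2 : (#|F| ^ 2 - #|F| ^ 1 = #|F| * (#|F| - 1))%N.
  by rewrite mulnBr muln1 expnS expn1.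
have es : (#|F| ^ s.+1 - #|F| ^ 1 = #|F| * (#|F| ^ s - 1))%N.
  by rewrite mulnBr muln1 expnS expn1.
rewrite e2 es mulnCA /= => /eqP; rewrite eqn_pmul2l ?(ltnW q_gt1) // => /eqP <-.
by rewrite mulnK // subn_gt0.
Qed.

End Projective.

Section Cone.
Variables (F : finFieldType) (n : nat) (Om Gam : 'M[F]_n) (B : {set 'M[F]_n}).
Hypothesis skew_Om_Gam : (Om :&: Gam)%MS = 0.
Hypothesis B_in_Gam : forall X, X \in B -> is_point X /\ (X <= Gam)%MS.
Hypothesis B_nontrivial : nontrivial_bset Gam B.
Local Notation K := (cone Om B).

Lemma line_in_cone_row (L : 'M[F]_n) (v : 'rV[F]_n) :
  line_in L K -> v != 0 -> (v <= L)%MS -> exists2 R, R \in B & (v <= Om + R)%MS.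
Proof.
move=> LK v_nz vL; have := forallP LK <<v>>%MS.
rewrite /is_point is_psub_gen ?rank_rV ?v_nz // genmxE vL inE => /andP[_ /existsP[R /andP[RB]]].
by rewrite genmxE; exists R.
Qed.

Lemma line_in_cone_sub (L : 'M[F]_n) : line_in L K -> (L <= Om + Gam)%MS.
Proof.
move=> LK; apply/row_subP => i; have [->|v_nz] := eqVneq (row i L) 0.
  by rewrite sub0mx.
have [R /B_in_Gam[_ sRG] sv] := line_in_cone_row LK v_nz (row_sub i L).
exact: submx_trans sv (addsmxS (submx_refl _) sRG).
Qed.

Lemma mxrank_proj_skew (L : 'M[F]_n) : (Om :&: L)%MS = 0 -> (L <= Om + Gam)%MS ->
  \rank ((Om + L) :&: Gam)%MS = \rank L.
Proof.
move=> OmL0 sL; set M := ((Om + L) :&: Gam)%MS.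
have OmM0 : (Om :&: M)%MS = 0.
  by apply/eqP; rewrite -submx0 -skew_Om_Gam capmxS ?capmxSr.
have le_M : (\rank (Om + M)%MS <= \rank (Om + L)%MS)%N.
  by rewrite mxrankS // addsmx_sub addsmxSl capmxSl.
have le_sum : (\rank (Om + L + Gam)%MS <= \rank (Om + Gam)%MS)%N.
  by rewrite mxrankS // !addsmx_sub addsmxSl addsmxSr sL.
rewrite (mxrank_disjoint_sum OmM0) (mxrank_disjoint_sum OmL0) in le_M.
rewrite (mxrank_disjoint_sum skew_Om_Gam) in le_sum.
have := mxrank_sum_cap (Om + L)%MS Gam; rewrite (mxrank_disjoint_sum OmL0) -/M; lia.
Qed.

(* A point Y of the projection of L comes from a vector v of L with
   <Om, Y> = <Om, v>; the base point R below v then satisfies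
   Y <= <Om, R> :&: Gam = R. *)
Lemma proj_skew_line_point_in_base (L Y : 'M[F]_n) :
  line_in L K -> (Om :&: L)%MS = 0 -> is_point Y -> (Y <= (Om + L) :&: Gam)%MS ->
  Y \in B.
Proof.
move=> LK OmL0 pY; rewrite sub_capmx => /andP[sYOL sYG].
have rY := psub_rank pY.
have nYOm : ~~ (Y <= Om)%MS.
  apply/negP => sYOm; have : (Y <= Om :&: Gam)%MS by rewrite sub_capmx sYOm.
  by rewrite skew_Om_Gam submx0 -mxrank_eq0 rY.
set C := ((Om + Y) :&: L)%MS.
have C_nz : C != 0.
  rewrite -mxrank_eq0; have := mxrank_sum_cap (Om + Y)%MS L.
  have : (\rank (Om + Y + L)%MS <= \rank (Om + L)%MS)%N.
    by rewrite mxrankS // !addsmx_sub addsmxSl addsmxSr sYOL.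
  rewrite (mxrank_adds_rank1 rY nYOm) (mxrank_disjoint_sum OmL0) -/C; lia.
set v := nz_row C; have v_nz : v != 0 by rewrite nz_row_eq0.
have := nz_row_sub C; rewrite -/v sub_capmx => /andP[svOY svL].
have [R RB svR] := line_in_cone_row LK v_nz svL.
have [pR sRG] := B_in_Gam RB.
have nvOm : ~~ (v <= Om)%MS.
  by apply: contra v_nz => svOm; rewrite -submx0 -OmL0 sub_capmx svOm.
have rv : \rank v = 1%N by rewrite rank_rV v_nz.
have sOYv := addsmx_exchange rv rY svOY nvOm.
have sYOR : (Y <= Om + R)%MS.
  apply: submx_trans (submx_trans (addsmxSr Om Y) sOYv) _.
  by rewrite addsmx_sub addsmxSl.
have sYR : (Y <= R)%MS.
  by apply: submx_trans (capmx_adds_skew skew_Om_Gam sRG); rewrite sub_capmx sYOR.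
by rewrite (psub_eq pY pR sYR).
Qed.

Lemma cone_line_meets_vertex (L : 'M[F]_n) :
  is_line L -> line_in L K -> (Om :&: L)%MS != 0.
Proof.
move=> /psub_rank rL LK; apply/eqP => OmL0.
set M := <<((Om + L) :&: Gam)%MS>>%MS.
have lM : is_line M by rewrite /is_line is_psub_gen // mxrank_proj_skew ?line_in_cone_sub.
have sMG : (M <= Gam)%MS by rewrite genmxE capmxSr.
case/negP: (B_nontrivial lM sMG); apply/forallP => Y; apply/implyP => pY.
by rewrite genmxE; apply/implyP; exact: proj_skew_line_point_in_base.
Qed.

Lemma lines_through_in_cone (P Q : 'M[F]_n) :
  is_point P -> ~~ (P <= Om)%MS -> Q \in B -> (P <= Om + Q)%MS ->
  lines_through_in P K = [set L | is_line L && (P <= L)%MS && (L <= Om + Q)%MS].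
Proof.
move=> pP nPOm QB sPOQ; apply/setP => L; rewrite !inE.
apply/andP/andP => [[/andP[lL sPL] LK]|[/andP[lL sPL] sLOQ]]; split.
- by rewrite lL.
- have sLOP : (L <= Om + P)%MS.
    apply: line_meeting_sub_adds (psub_rank lL) (psub_rank pP) sPL nPOm _.
    exact: cone_line_meets_vertex lL LK.
  by apply: submx_trans sLOP _; rewrite addsmx_sub addsmxSl.
- by rewrite lL.
- apply/forallP => X; apply/implyP => pX; apply/implyP => sXL.
  rewrite inE pX; apply/existsP; exists Q; rewrite QB.
  exact: submx_trans sXL sLOQ.
Qed.

End Cone.

Theorem lemma5p9 (F : finFieldType) (q n t : nat) (hq : #|F| = q) (ht : (1 <= t)%N)
  (Om Gam : 'M[F]_n) (B : {set 'M[F]_n})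
  (hOm : \rank Om = (t - 1)%N) (hGam : \rank Gam = 3%N)
  (hskew : (Om :&: Gam)%MS = 0)
  (hB : minimal_blocking_set Gam B) (hBnt : nontrivial_bset Gam B) :
  forall P : 'M[F]_n, P \in cone Om B -> ~~ (P <= Om)%MS ->
    #|lines_through_in P (cone Om B)| = ((q ^ (t - 1) - 1) %/ (q - 1))%N.
Proof.
move=> P PK nPOm; have [[B_in_Gam _] _] := hB.
move: PK; rewrite inE => /andP[pP /existsP[Q /andP[QB sPOQ]]].
have [/psub_rank rQ sQG] := B_in_Gam Q QB.
have OmQ0 : (Om :&: Q)%MS = 0 by apply/eqP; rewrite -submx0 -hskew capmxS.
rewrite (lines_through_in_cone hskew B_in_Gam hBnt pP nPOm QB sPOQ).
by rewrite card_lines_through // mxrank_disjoint_sum // hOm rQ addn1 hq.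
Qed.
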